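(* A regular language is $\mathcal{R}$-trivial if and only if it is accepted by an rpoNFA.
   Context: An NFA is $\mathcal{A}=(Q,\Sigma,\cdot,I,F)$ with transition function $\cdot:Q\times\Sigma\to 2^Q$. State $q$ is reachable from $p$ ($p\le q$) if $q\in p\cdot w$ for some word $w$; a poNFA is an NFA for which $\le$ is a partial order. A restricted poNFA (rpoNFA) is a poNFA such that for every state $q$ and symbol $a$, if $q\in q\cdot a$ then $q\cdot a=\{q\}$. For words, $v=a_1\cdots a_n$ is a subsequence of $w$ ($v\preccurlyeq w$) if $w\in\Sigma^*a_1\Sigma^*\cdots\Sigma^*a_n\Sigma^*$; $\mathrm{sub}_k(v)=\{u\mid u\preccurlyeq v,\ |u|\le k\}$; $w_1\sim_k w_2$ iff $\mathrm{sub}_k(w_1)=\mathrm{sub}_k(w_2)$. For $k\ge0$, $x\sim^{\mathcal{R}}_k y$ iff for each prefix $u$ of $x$ there is a prefix $v$ of $y$ with $u\sim_k v$, and for each prefix $v$ of $y$ there is a prefix $u$ of $x$ with $u\sim_k v$. A regular language is $k$-$\mathcal{R}$-trivial if it is a union of $\sim^{\mathcal{R}}_k$-classes, and $\mathcal{R}$-trivial if it is $k$-$\mathcal{R}$-trivial for some $k\ge0$. *)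

From mathcomp Require Import all_boot.
Set Implicit Arguments. Unset Strict Implicit. Unset Printing Implicit Defensive.

Record nfa (Sigma : finType) := Nfa {
  nstate : finType;
  ntrans : nstate -> Sigma -> {set nstate};
  ninit  : {set nstate};
  nfin   : {set nstate} }.

Section NFA.
Variables (Sigma : finType) (N : nfa Sigma).
Local Notation Q := (nstate N).

Definition nreach (S : {set Q}) (w : seq Sigma) : {set Q} :=
  foldl (fun (S : {set Q}) (a : Sigma) => \bigcup_(p in S) @ntrans _ N p a) S w.

Definition ndelta (p : Q) (w : seq Sigma) : {set Q} := nreach [set p] w.

Definition naccepts (w : seq Sigma) : Prop := nreach (@ninit _ N) w :&: @nfin _ N != set0.

Definition nle (p q : Q) : Prop := exists w, q \in ndelta p w.

(* poNFA: reachability is a partial order (reflexivity and transitivity are automatic). *)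
Definition is_poNFA : Prop :=
  (forall p, nle p p) /\ (forall p q r, nle p q -> nle q r -> nle p r) /\
  (forall p q, nle p q -> nle q p -> p = q).

Definition is_rpoNFA : Prop :=
  is_poNFA /\ forall (q : Q) (a : Sigma), q \in @ntrans _ N q a -> @ntrans _ N q a = [set q].
End NFA.

Definition language (Sigma : finType) := seq Sigma -> Prop.

Definition accepts_lang (Sigma : finType) (N : nfa Sigma) (L : language Sigma) : Prop :=
  forall w, L w <-> naccepts N w.

Definition regular (Sigma : finType) (L : language Sigma) : Prop :=
  exists N : nfa Sigma, accepts_lang N L.

Definition sim_k (Sigma : finType) (k : nat) (w1 w2 : seq Sigma) : Prop :=
  forall u : seq Sigma, (subseq u w1 && (size u <= k)) = (subseq u w2 && (size u <= k)).

Definition simR_k (Sigma : finType) (k : nat) (x y : seq Sigma) : Prop :=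
  (forall u, prefix u x -> exists2 v, prefix v y & sim_k k u v) /\
  (forall v, prefix v y -> exists2 u, prefix u x & sim_k k u v).

Definition k_R_trivial (Sigma : finType) (k : nat) (L : language Sigma) : Prop :=
  forall x y, simR_k k x y -> (L x <-> L y).

Definition R_trivial (Sigma : finType) (L : language Sigma) : Prop :=
  exists k, k_R_trivial k L.

From mathcomp Require Import all_boot boolp.
Set Implicit Arguments. Unset Strict Implicit. Unset Printing Implicit Defensive.

(* In an rpoNFA a run from q first loops on q while it reads letters that fix
   q, and leaves q on the first letter b that does not, to a state strictly
   above q.  If x ~^R_k y and x = u b x' with u made of loop letters, then y
   splits the same way as v b y' with x' ~^R_(k-1) y', so induction on the
   number of states above q shows that ~^R_|Q| preserves acceptance.
   Conversely, for a k-R-trivial language consider the deterministic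
   automaton whose state after w is the set of sub_k of the prefixes of w.
   Reading a letter only adds elements to the state, so reachability is
   inclusion, a partial order, and determinism makes a self-loop the only
   transition out of its state.  Two words reaching the same state are
   ~^R_k-equivalent, so the automaton accepts exactly the language. *)

Section NfaReach.
Variables (Sigma : finType) (N : nfa Sigma).
Local Notation Q := (nstate N).
Implicit Types (S : {set Q}) (p q : Q) (a : Sigma) (w : seq Sigma).

Definition accepts_from q w : bool := ndelta q w :&: nfin N != set0.

Lemma nreach_cons S a w :
  nreach S (a :: w) = nreach (\bigcup_(p in S) ntrans p a) w.
Proof. by []. Qed.

Lemma nreach_rcons S w a : nreach S (rcons w a) = \bigcup_(p in nreach S w) ntrans p a.
Proof. by rewrite /nreach foldl_rcons. Qed.

Lemma nreach_cat S w1 w2 : nreach S (w1 ++ w2) = nreach (nreach S w1) w2.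
Proof. by rewrite /nreach foldl_cat. Qed.

Lemma ndelta_cons q a w : ndelta q (a :: w) = nreach (ntrans q a) w.
Proof. by rewrite /ndelta nreach_cons big_set1. Qed.

Lemma nreachS S1 S2 w : S1 \subset S2 -> nreach S1 w \subset nreach S2 w.
Proof.
elim: w S1 S2 => [|a w IH] S1 S2 // sS12; rewrite !nreach_cons; apply: IH.
by apply/subsetP => r /bigcupP [p pS1 rp]; apply/bigcupP; exists p => //; apply: (subsetP sS12).
Qed.

Lemma ndelta_sub_nreach S q w : q \in S -> ndelta q w \subset nreach S w.
Proof. by move=> qS; apply: nreachS; rewrite sub1set. Qed.

Lemma mem_nreach S w r : r \in nreach S w -> exists2 q, q \in S & r \in ndelta q w.
Proof.
elim: w S r => [|a w IH] S r.
  by move=> rS; exists r; rewrite // /ndelta /nreach /= set11.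
rewrite nreach_cons => /IH [p' /bigcupP [q qS p'q] rp']; exists q => //.
by rewrite ndelta_cons; apply: (subsetP (ndelta_sub_nreach w p'q)).
Qed.

Lemma nreach_acceptsP S w :
  reflect (exists2 q, q \in S & accepts_from q w) (nreach S w :&: nfin N != set0).
Proof.
apply: (iffP (set0Pn _)) => [[r /setIP [/mem_nreach [q qS rq] rF]] | [q qS /set0Pn [r]]].
  by exists q => //; apply/set0Pn; exists r; rewrite inE rq.
by rewrite inE => /andP [rq rF]; exists r; rewrite inE (subsetP (ndelta_sub_nreach w qS)).
Qed.

Lemma nacceptsP w : naccepts N w <-> exists2 q, q \in ninit N & accepts_from q w.
Proof. exact: iff_sym (rwP (nreach_acceptsP _ _)). Qed.

Lemma accepts_from_cons q a w :
  accepts_from q (a :: w) = [exists q' in ntrans q a, accepts_from q' w].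
Proof.
rewrite /accepts_from ndelta_cons.
by apply/nreach_acceptsP/exists_inP => -[q' ? ?]; exists q'.
Qed.

Lemma nle_refl q : nle q q.
Proof. by exists [::]; rewrite /ndelta /nreach /= set11. Qed.

Lemma nle_trans p q r : nle p q -> nle q r -> nle p r.
Proof.
move=> [w1 pq] [w2 qr]; exists (w1 ++ w2); rewrite /ndelta nreach_cat.
exact: (subsetP (ndelta_sub_nreach w2 pq)).
Qed.

Lemma nle_step q q' a : q' \in ntrans q a -> nle q q'.
Proof. by exists [:: a]; rewrite ndelta_cons /nreach. Qed.

End NfaReach.

Section Subsequences.
Variable Sigma : finType.
Implicit Types (P : pred Sigma) (a b : Sigma) (u v w x y : seq Sigma).

Lemma split_first_fail P x :
  all P x \/ exists u b x', [/\ x = u ++ b :: x', all P u & ~~ P b].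
Proof.
elim: x => [|c x IH]; first by left.
case Pc: (P c); last by right; exists [::], c, x; rewrite Pc.
case: IH => [Px | [u [b [x' [-> Pu Pb]]]]]; first by left; rewrite /= Pc.
by right; exists (c :: u), b, x'; rewrite /= Pc.
Qed.

Lemma sim_k_sym k u v : sim_k k u v -> sim_k k v u.
Proof. by move=> suv s; rewrite suv. Qed.

Lemma simR_k_sym k x y : simR_k k x y -> simR_k k y x.
Proof.
case=> xy yx; split=> u.
  by move/yx=> [v pv s]; exists v => //; apply: sim_k_sym.
by move/xy=> [v pv s]; exists v => //; apply: sim_k_sym.
Qed.

Lemma sim_k_mem k u v a : 0 < k -> sim_k k u v -> (a \in u) = (a \in v).
Proof. by move=> k_gt0 suv; have := suv [:: a]; rewrite !sub1seq /= k_gt0 !andbT. Qed.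

Lemma simR_k_mem k x y a : 0 < k -> simR_k k x y -> (a \in x) = (a \in y).
Proof.
move=> k_gt0 sxy; wlog ax : x y sxy / a \in x.
  move=> sub; apply/idP/idP => [ax | ay]; first by rewrite -(sub x).
  by rewrite -(sub y x) //; apply: simR_k_sym.
have [v /prefixP [t ->] sv] := sxy.1 x (prefix_refl x).
by rewrite ax mem_cat -(sim_k_mem a k_gt0 sv) ax.
Qed.

Lemma subseq_cons_skip b u p s : b \notin u -> subseq (b :: s) (u ++ b :: p) = subseq s p.
Proof.
elim: u => [|c u IH] /=; first by rewrite eqxx.
by rewrite inE negb_or => /andP [/negbTE -> /IH].
Qed.

Lemma prefix_cat_cases z v w :
  prefix z (v ++ w) -> prefix z v \/ exists2 r, prefix r w & z = v ++ r.
Proof.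
elim: v z => [|c v IH] z; first by right; exists z.
case: z => [|d z] /=; first by left.
case/andP => /eqP -> /IH [pzv | [r pr ->]]; first by left; rewrite /= eqxx.
by right; exists r.
Qed.

Lemma prefix_cat_cons z v c w b : prefix z (v ++ c :: w) -> b \in z -> b \notin v ->
  exists2 r, prefix r w & z = v ++ c :: r.
Proof.
move=> /prefix_cat_cases [/prefixP [t ->] | [[|d r] /= pr ->]] bz bv.
- by move: bv; rewrite mem_cat bz.
- by move: bz; rewrite cats0 (negbTE bv).
- by case/andP: pr => /eqP -> pr; exists r.
Qed.

Lemma simR_k_prefix_cancel k u v b x' y' : b \notin u -> b \notin v ->
  (forall p, prefix p (u ++ b :: x') ->
     exists2 z, prefix z (v ++ b :: y') & sim_k k.+1 p z) ->
  forall p', prefix p' x' -> exists2 r, prefix r y' & sim_k k p' r.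
Proof.
move=> bu bv xy p' /prefixP [t x't].
have [z pz sz] := xy (u ++ b :: p') (ltac:(by apply/prefixP; exists t; rewrite x't -catA)).
have bz : b \in z by rewrite -(sim_k_mem b _ sz) // mem_cat mem_head orbT.
have [r pr zr] := prefix_cat_cons pz bz bv; exists r => // s.
case: (leqP (size s) k) => [sk | _]; last by rewrite !andbF.
by have := sz (b :: s); rewrite zr /= ltnS sk !andbT !subseq_cons_skip.
Qed.

Lemma simR_k_cancel k u v b x' y' : b \notin u -> b \notin v ->
  simR_k k.+1 (u ++ b :: x') (v ++ b :: y') -> simR_k k x' y'.
Proof.
move=> bu bv /[dup] /simR_k_sym [yx _] [xy _].
split; first exact: simR_k_prefix_cancel xy.
move=> q /(simR_k_prefix_cancel bv bu yx) [r pr sr].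
by exists r => //; apply: sim_k_sym.
Qed.

Lemma simR_k_split_first P k u b x' y : all P u -> ~~ P b ->
  simR_k k.+1 (u ++ b :: x') y ->
  exists v y', [/\ y = v ++ b :: y', all P v & simR_k k x' y'].
Proof.
move=> Pu Pb sxy.
have notin_all s c : all P s -> ~~ P c -> c \notin s by move=> Ps; apply: contra => /(allP Ps).
have [Py | [v [c [y' [yv Pv Pc]]]]] := split_first_fail P y.
  by move: Pb; rewrite (allP Py) // -(simR_k_mem b _ sxy) // mem_cat mem_head orbT.
subst y.
have [z pz sz] := sxy.1 (u ++ [:: b]) (ltac:(by apply/prefixP; exists x'; rewrite -catA)).
have bz : b \in z by rewrite -(sim_k_mem b _ sz) // mem_cat mem_head orbT.
have [r _ zr] := prefix_cat_cons pz bz (notin_all _ _ Pv Pb).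
(* [z] matches [u ++ [:: b]] and extends past [v], so it contains [c]. *)
have cb : c = b.
  have : c \in u ++ [:: b] by rewrite (sim_k_mem c _ sz) // zr mem_cat mem_head orbT.
  by rewrite mem_cat (negbTE (notin_all _ _ Pu Pc)) mem_seq1 => /eqP.
subst c; exists v, y'; split=> //.
exact: simR_k_cancel (notin_all _ _ Pu Pb) (notin_all _ _ Pv Pb) sxy.
Qed.

Lemma sim_k_rcons k w w' a : sim_k k w w' -> sim_k k (rcons w a) (rcons w' a).
Proof.
move=> sww' s.
have sww'_rev t : size t <= k -> subseq t (rev w) = subseq t (rev w').
  move=> tk; rewrite -(subseq_rev t) -[in RHS](subseq_rev t) !revK.
  by have := sww' (rev t); rewrite size_rev tk !andbT.
rewrite -(subseq_rev s (rcons w a)) -(subseq_rev s (rcons w' a)) !rev_rcons -(size_rev s).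
case: (rev s) => [|c t] //=; case: (ltnP (size t) k) => [tk | _]; last by rewrite !andbF.
by rewrite !andbT; case: eqP => _; apply: sww'_rev => //; apply: ltnW.
Qed.

End Subsequences.

Section RestrictedPartialOrder.
Variables (Sigma : finType) (N : nfa Sigma).
Hypothesis rpoN : is_rpoNFA N.
Local Notation Q := (nstate N).
Implicit Types (q : Q) (a : Sigma) (u w x y : seq Sigma).

Definition self_loop q a : bool := q \in ntrans q a.

Definition nup q : {set Q} := [set r | `[< nle q r >]].

Lemma ndelta_self_loops q u : all (self_loop q) u -> ndelta q u = [set q].
Proof.
elim: u => [|a u IH] //= /andP [qa /IH qu].
by rewrite ndelta_cons rpoN.2.
Qed.

Lemma accepts_from_self_loops q u w :
  all (self_loop q) u -> accepts_from q (u ++ w) = accepts_from q w.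
Proof.
by move=> qu; rewrite /accepts_from {1}/ndelta nreach_cat -/(ndelta q u) ndelta_self_loops.
Qed.

Lemma nup_proper q q' a : q' \in ntrans q a -> ~~ self_loop q a -> nup q' \proper nup q.
Proof.
have [[_ [_ nle_anti]] _] := rpoN.
move=> qq' qa; have le_qq' := nle_step qq'; apply/properP; split.
  by apply/subsetP => r; rewrite !inE => /asboolP le_q'r; apply/asboolP; apply: nle_trans le_q'r.
exists q; rewrite inE; first exact/asboolP/nle_refl.
apply: contra qa => /asboolP le_q'q.
by rewrite /self_loop {1}(nle_anti _ _ le_qq' le_q'q).
Qed.

Lemma accepts_from_simR k q x y :
  #|nup q| <= k -> simR_k k x y -> accepts_from q x -> accepts_from q y.
Proof.
elim: k q x y => [|k IH] q x y.
  have q_nup : q \in nup q by rewrite inE; apply/asboolP/nle_refl.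
  by rewrite leqn0 => /eqP/cards0_eq nup0; rewrite nup0 inE in q_nup.
move=> nup_q sxy.
have [xq | [u [b [x' [xu uq bq]]]]] := split_first_fail (self_loop q) x.
  have yq : all (self_loop q) y.
    by apply/allP => a; rewrite -(simR_k_mem a _ sxy) //; apply: (allP xq).
  by rewrite -[x]cats0 -[y]cats0 !accepts_from_self_loops.
subst x; have [v [y' [-> vq sx'y']]] := simR_k_split_first uq bq sxy.
rewrite !accepts_from_self_loops // !accepts_from_cons => /exists_inP [q' qq' acc].
apply/exists_inP; exists q' => //; apply: IH acc => //.
by rewrite -ltnS; apply: leq_trans nup_q; apply: proper_card; apply: nup_proper qq' bq.
Qed.

Lemma rpoNFA_k_R_trivial L : accepts_lang N L -> k_R_trivial #|Q| L.
Proof.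
move=> NL; suff acc x y : simR_k #|Q| x y -> naccepts N x -> naccepts N y.
  by move=> x y sxy; rewrite !NL; split; apply: acc => //; apply: simR_k_sym.
move=> sxy /nacceptsP [q qI accx]; apply/nacceptsP; exists q => //.
exact: accepts_from_simR (max_card _) sxy accx.
Qed.

End RestrictedPartialOrder.

Section SubwordAutomaton.
Variables (Sigma : finType) (k : nat).
Implicit Types (a : Sigma) (u v w : seq Sigma).

Fixpoint words_upto n : seq (seq Sigma) :=
  if n is n'.+1 then [::] :: [seq a :: s | a <- enum Sigma, s <- words_upto n']
  else [:: [::]].

Lemma mem_words_upto n s : (s \in words_upto n) = (size s <= n).
Proof.
elim: n s => [|n IH] [|a s] //; rewrite /= in_cons /=.
apply/allpairsP/idP => [[[c t] [_ + [_ ->]]] | sn]; first by rewrite IH.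
by exists (a, s); rewrite mem_enum IH.
Qed.

Definition short_word := seq_sub (words_upto k).

Definition subk u : {set short_word} := [set s | subseq (val s) u].

Lemma subk_eq u v : subk u = subk v <-> sim_k k u v.
Proof.
split=> [uv s | suv]; last first.
  apply/setP => s; rewrite !inE.
  by have := suv (val s); rewrite -mem_words_upto (valP s) !andbT.
case: (leqP (size s) k) => [sk | ]; last by rewrite !andbF.
rewrite !andbT; rewrite -mem_words_upto in sk.
by move/setP: uv => /(_ (SeqSub sk)); rewrite !inE.
Qed.

Lemma subkS u w : prefix u w -> subk u \subset subk w.
Proof.
case/prefixP=> t ->; apply/subsetP => s; rewrite !inE => su.
exact: subseq_trans su (prefix_subseq u t).
Qed.

Definition subk_prefixes w : {set {set short_word}} :=
  [set subk (take i w) | i : 'I_(size w).+1].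

Lemma subk_prefixesP S w :
  reflect (exists2 u, prefix u w & S = subk u) (S \in subk_prefixes w).
Proof.
apply: (iffP idP) => [/imsetP [i _ ->] | [u uw ->]].
  by exists (take i w); rewrite ?prefix_take.
have uw' : size u < (size w).+1 by rewrite ltnS size_prefix.
have take_u : take (size u) w = u by apply/eqP; rewrite -prefixE.
by apply/imsetP; exists (Ordinal uw'); rewrite //= take_u.
Qed.

Lemma subk_prefixes_last w : subk w \in subk_prefixes w.
Proof. by apply/subk_prefixesP; exists w; rewrite ?prefix_refl. Qed.

Lemma subk_prefixes_rcons w a :
  subk_prefixes (rcons w a) = subk (rcons w a) |: subk_prefixes w.
Proof.
apply/setP => S; rewrite in_setU1; apply/subk_prefixesP/predU1P.
  case=> u + ->; rewrite -cats1 => /prefix_cat_cases [uw | [r ra ->]].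
    by right; apply/subk_prefixesP; exists u.
  move: ra; rewrite prefixs1 => /orP [] /eqP ->; last by left.
  by right; rewrite cats0 subk_prefixes_last.
case=> [-> | /subk_prefixesP [u uw ->]]; first by exists (rcons w a); rewrite ?prefix_refl.
by exists u; rewrite // (prefix_trans uw (prefix_rcons w a)).
Qed.

Lemma subk_prefixes_subk w w' : subk_prefixes w = subk_prefixes w' -> subk w = subk w'.
Proof.
have max_subk u S : S \in subk_prefixes u -> S \subset subk u.
  by case/subk_prefixesP => v vu ->; apply: subkS.
move=> ww'; apply/eqP; rewrite eqEsubset !max_subk //.
  by rewrite ww' subk_prefixes_last.
by rewrite -ww' subk_prefixes_last.
Qed.

Lemma subk_prefixes_rcons_congr w w' a :
  subk_prefixes w = subk_prefixes w' -> subk_prefixes (rcons w a) = subk_prefixes (rcons w' a).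
Proof.
move=> ww'; rewrite !subk_prefixes_rcons ww'; congr (_ |: _).
by apply/subk_eq/sim_k_rcons/subk_eq/subk_prefixes_subk.
Qed.

Lemma subk_prefixes_simR w w' : subk_prefixes w = subk_prefixes w' -> simR_k k w w'.
Proof.
move=> ww'; split=> u uw.
  have /subk_prefixesP [v vw' uv] : subk u \in subk_prefixes w'.
    by rewrite -ww'; apply/subk_prefixesP; exists u.
  by exists v => //; apply/subk_eq.
have /subk_prefixesP [v vw uv] : subk u \in subk_prefixes w.
  by rewrite ww'; apply/subk_prefixesP; exists u.
by exists v => //; apply/subk_eq.
Qed.

Variable L : language Sigma.

(* Only the states [subk_prefixes w] have outgoing transitions. *)
Definition subk_automaton : nfa Sigma :=
  @Nfa Sigma {set {set short_word}}
    (fun P a => [set P' | `[< exists w, P = subk_prefixes w /\ P' = subk_prefixes (rcons w a) >]])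
    [set subk_prefixes [::]]
    [set P | `[< exists2 w, P = subk_prefixes w & L w >]].

Lemma subk_automaton_trans w a :
  @ntrans _ subk_automaton (subk_prefixes w) a = [set subk_prefixes (rcons w a)].
Proof.
apply/setP => P'; rewrite !inE; apply/asboolP/eqP => [[w' [ww' ->]] | ->]; last by exists w.
exact/esym/subk_prefixes_rcons_congr.
Qed.

Lemma subk_automaton_reach w :
  nreach (@ninit _ subk_automaton) w = [set subk_prefixes w].
Proof.
elim/last_ind: w => [|w a IH] //.
by rewrite nreach_rcons IH big_set1 subk_automaton_trans.
Qed.

Lemma subk_automaton_increasing (P P' : nstate subk_automaton) w :
  P' \in ndelta P w -> P \subset P'.
Proof.
elim/last_ind: w P' => [|w a IH] P'; first by rewrite /ndelta /nreach /= => /set1P ->.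
rewrite /ndelta nreach_rcons => /bigcupP [P'' /IH PP''].
rewrite inE => /asboolP [w' [P''w' ->]]; apply: subset_trans PP'' _.
by rewrite P''w' subk_prefixes_rcons subsetU1.
Qed.

Lemma subk_automaton_rpo : is_rpoNFA subk_automaton.
Proof.
split; first split; [exact: nle_refl | split; first exact: nle_trans |].
  move=> P P' [w1 /subk_automaton_increasing PP'] [w2 /subk_automaton_increasing P'P].
  by apply/eqP; rewrite eqEsubset PP' P'P.
move=> P a; rewrite inE => /asboolP [w [Pw Pwa]].
by rewrite {1}Pw subk_automaton_trans -Pwa.
Qed.

Lemma subk_automaton_accepts : k_R_trivial k L -> accepts_lang subk_automaton L.
Proof.
move=> kL w; rewrite /naccepts subk_automaton_reach; split=> [Lw | ].
  by apply/set0Pn; exists (subk_prefixes w); rewrite !inE eqxx; apply/asboolP; exists w.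
case/set0Pn => P /setIP [/set1P ->]; rewrite inE => /asboolP [w' ww' Lw'].
exact: (kL w' w (subk_prefixes_simR (esym ww'))).1.
Qed.

End SubwordAutomaton.

Theorem theorem3 (Sigma : finType) (L : language Sigma) :
  regular L ->
  (R_trivial L <-> exists N : nfa Sigma, is_rpoNFA N /\ accepts_lang N L).
Proof.
move=> _; split=> [[k kL] | [N [rpoN NL]]].
  exists (subk_automaton k L).
  by split; [apply: subk_automaton_rpo | apply: subk_automaton_accepts].
by exists #|nstate N|; apply: rpoNFA_k_R_trivial.
Qed.
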